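(* Let $M=(m_0,m_1,m_2,\ldots)$ be a (possibly finite) sequence of integers with $m_0=1$ and $m_j\ge 2$ for all $j\ge 1$. Assume that for every index $t\ge1$ and every prime $p$, if $p\mid m_t$ then $p\ge t$. Then for all positive integers $n$ and $r$ (with $r$ at most the largest index of $M$ if $M$ is finite) we have $$p_M(m_1m_2\cdots m_r\,n-1)\equiv 0 \pmod{\prod_{t=2}^{r} m_t}.$$
   Context: For $r\ge 0$ put $M_r:=m_0m_1\cdots m_r$. An $M$-ary partition of a positive integer $N$ is a partition of $N$ (order of parts disregarded) all of whose parts are of the form $M_r$ for some $r\ge 0$. $p_M(N)$ denotes the number of $M$-ary partitions of $N$. An empty product equals $1$. *)

From mathcomp Require Import all_boot.
Set Implicit Arguments. Unset Strict Implicit. Unset Printing Implicit Defensive.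

(* The sequence M = (m_0, m_1, ...) is given by m : nat -> nat together with
   K : option nat; K = Some k means M is finite with largest index k,
   K = None means M is infinite.  Values m j for j beyond k are irrelevant. *)
Definition in_range (K : option nat) (j : nat) : bool :=
  if K is Some k then j <= k else true.

Definition Mprod (m : nat -> nat) (r : nat) : nat := \prod_(i < r.+1) m i.

(* k is an admissible part: k = M_r for some index r of M.
   (Under the standing hypotheses M_r > r for r >= 1 and M_0 = 1, so
   r < k.+1 is no restriction.) *)
Definition is_Mpart (m : nat -> nat) (K : option nat) (k : nat) : bool :=
  [exists r : 'I_k.+1, in_range K r && (Mprod m r == k)].

(* A partition of N is encoded by its multiplicity function c, where c k is
   the number of parts equal to k (parts are between 1 and N, multiplicities
   at most N). *)
Definition pM (m : nat -> nat) (K : option nat) (N : nat) : nat :=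
  #|[set c : {ffun 'I_N.+1 -> 'I_N.+1} |
      [forall k, (c k != 0 :> nat) ==> is_Mpart m K k]
      && (\sum_(k < N.+1) k * c k == N)]|.

From mathcomp Require Import all_boot all_algebra zify.
Set Implicit Arguments. Unset Strict Implicit. Unset Printing Implicit Defensive.
Import GRing.Theory Num.Theory.

(* Write Q_t(z) for the number of partitions of M_t z into parts M_s with s >= t.
   Removing the parts equal to M_t gives Q_t(z) = sum_(q <= z / m_(t+1)) Q_(t+1)(q),
   and r such steps turn p_M(M_r n - 1) = Q_0(M_r n - 1) into
   sum_(z < n) g_r(n - z) Q_r(z), with g_0 the indicator of 1 and
   g_(t+1)(w) = sum_(x < m_(t+1) w) g_t(x + 1).  By induction, on positive arguments
   g_t is m_2 ... m_t times an integer-valued polynomial h of degree < t: by Newton's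
   forward difference formula, sum_(x < m_(t+1) w) h(x) is an integer combination of
   binomials C(m_(t+1) w, j + 1) with j < t, each divisible by m_(t+1) since the prime
   factors of m_(t+1) exceed t. *)

Section FiniteDifferences.
Local Open Scope ring_scope.
Variable V : zmodType.
Implicit Types f g : nat -> V.

Definition fdiff f : nat -> V := fun x => f x.+1 - f x.

Definition deg_lt k f := forall x, iter k fdiff f x = 0.

Lemma iter_fdiff_ext k f g : f =1 g -> iter k fdiff f =1 iter k fdiff g.
Proof. by elim: k => [|k IH] //= fg x; rewrite /fdiff !IH. Qed.

Lemma deg_lt_ext k f g : f =1 g -> deg_lt k f -> deg_lt k g.
Proof. by move=> fg df x; rewrite -(iter_fdiff_ext k fg). Qed.

Lemma deg_ltS k f : deg_lt k.+1 f <-> deg_lt k (fdiff f).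
Proof. by rewrite /deg_lt iterSr. Qed.

Lemma iter_fdiff_sum k (I : Type) (r : seq I) (P : pred I) (F : I -> nat -> V) x :
  iter k fdiff (fun y => \sum_(i <- r | P i) F i y) x =
  \sum_(i <- r | P i) iter k fdiff (F i) x.
Proof. by elim: k x => [|k IH] x //=; rewrite /fdiff !IH sumrB. Qed.

Lemma deg_lt_sum k (I : Type) (r : seq I) (P : pred I) (F : I -> nat -> V) :
  (forall i, P i -> deg_lt k (F i)) -> deg_lt k (fun y => \sum_(i <- r | P i) F i y).
Proof. by move=> dF x; rewrite iter_fdiff_sum big1 // => i /dF. Qed.

Lemma deg_lt_comp_affine k f a b : deg_lt k f -> deg_lt k (fun x => f (a * x + b)%N).
Proof.
elim: k f b => [|k IH] f b df; first by move=> x; apply: df.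
apply/deg_ltS; apply: (@deg_lt_ext _ (fun x => \sum_(u < a) fdiff f (a * x + (b + u))%N)).
  move=> x; have := telescope_sumr (fun u => f (a * x + b + u)%N) (leq0n a).
  rewrite big_mkord addn0 /fdiff (_ : a * x.+1 + b = a * x + b + a)%N; last by lia.
  by move=> <-; apply: eq_bigr => u _; rewrite !addnA addnS.
by apply: deg_lt_sum => u _; apply: IH; apply/deg_ltS.
Qed.

Lemma deg_lt_partial_sum t f a b :
  deg_lt t f -> deg_lt t.+1 (fun w => \sum_(x < a * w + b) f x).
Proof.
move=> df; apply/deg_ltS.
apply: (@deg_lt_ext _ (fun w => \sum_(u < a) f (a * w + (b + u))%N)).
  move=> w; rewrite /fdiff (_ : a * w.+1 + b = (a * w + b) + a)%N; last by lia.
  by rewrite big_split_ord /= addrAC subrr add0r; apply: eq_bigr => u _; rewrite addnA.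
by apply: deg_lt_sum => u _; apply: deg_lt_comp_affine.
Qed.

Lemma hockey_stick x j : (\sum_(y < x) 'C(y, j) = 'C(x, j.+1))%N.
Proof.
elim: x => [|x IH]; first by rewrite big_ord0.
by rewrite big_ord_recr /= IH binS.
Qed.

Lemma newton_fdiff t f x :
  deg_lt t f -> f x = \sum_(j < t) iter j fdiff f 0%N *+ 'C(x, j).
Proof.
elim: t f x => [|t IH] f x df; first by rewrite big_ord0; apply: df.
have df' : deg_lt t (fdiff f) by apply/deg_ltS.
rewrite big_ord_recl /= bin0 mulr1n.
have -> : f x = f 0%N + \sum_(y < x) fdiff f y.
  by rewrite -(big_mkord xpredT) telescope_sumr // addrC subrK.
congr (_ + _); under [LHS]eq_bigr => y _ do rewrite (IH _ y df').
by rewrite exchange_big; apply: eq_bigr => j _; rewrite sumrMnr hockey_stick -iterSr iterS.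
Qed.

Lemma sum_newton_fdiff t f n :
  deg_lt t f -> \sum_(x < n) f x = \sum_(j < t) iter j fdiff f 0%N *+ 'C(n, j.+1).
Proof.
move=> df; under eq_bigr => x _ do rewrite (newton_fdiff x df).
by rewrite exchange_big; apply: eq_bigr => j _; rewrite sumrMnr hockey_stick.
Qed.

End FiniteDifferences.

Arguments fdiff {V} f x.

Lemma iter_fdiff_mull (R : pzRingType) k (c : R) (f : nat -> R) x :
  iter k fdiff (fun y => c * f y)%R x = (c * iter k fdiff f x)%R.
Proof. by elim: k x => [|k IH] x //=; rewrite /fdiff !IH mulrBr. Qed.

Lemma deg_lt_mull_inv (R : idomainType) k (c : R) (f : nat -> R) :
  c != 0%R -> deg_lt k (fun y => c * f y)%R -> deg_lt k f.
Proof.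
move=> c0 dcf x; apply/eqP.
by have /eqP := dcf x; rewrite iter_fdiff_mull mulf_eq0 (negbTE c0).
Qed.

Lemma dvdn_bin d n k : coprime d k.+1 -> d %| n -> d %| 'C(n, k.+1).
Proof. by move=> cop dn; rewrite -(Gauss_dvdr _ cop) -mul_bin_diag dvdn_mulr. Qed.

Lemma dvdz_sum_deg_lt t (f : nat -> int) (d n : nat) :
  deg_lt t f -> (forall i, 0 < i <= t -> coprime d i) -> d %| n ->
  (d%:Z %| (\sum_(x < n) f x)%R)%Z.
Proof.
move=> df cop dn; rewrite (sum_newton_fdiff n df); apply: rpred_sum => j _.
rewrite -mulr_natr natz; apply: dvdz_mull; rewrite dvdzE !absz_nat.
by apply: dvdn_bin dn; apply: cop; rewrite /= ltn_ord.
Qed.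

Fixpoint weight (m : nat -> nat) (t w : nat) : nat :=
  if t is t'.+1 then \sum_(x < m t * w) weight m t' x.+1 else w == 1.

Section Weights.
Variables (m : nat -> nat) (T : nat).
Hypothesis m_gt0 : forall s, 0 < s <= T -> 0 < m s.
Hypothesis m_coprime : forall s i, 0 < i < s -> s <= T -> coprime (m s) i.

Lemma weight_factor t : 0 < t <= T ->
  exists h : nat -> int, deg_lt t h /\
    forall w, ((weight m t w.+1)%:Z = (\prod_(2 <= i < t.+1) m i)%:Z * h w)%R.
Proof.
elim: t => [//|t IH] /andP[_ tT].
have M_gt0 : 0 < m t.+1 by apply: m_gt0; rewrite tT.
have [t0 | t_gt0] := posnP t.
  subst t.
  exists (fun=> 1%R); split=> [x|w]; first by rewrite /= /fdiff subrr.
  have n_gt0 : 0 < m 1 * w.+1 by rewrite muln_gt0 M_gt0.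
  by rewrite big_geq // mulr1 /= -(prednK n_gt0) big_ord_recl big1.
have [h [dh Eh]] := IH (introT andP (conj t_gt0 (ltnW tT))).
set M := m t.+1 in M_gt0 *.
pose S w := (\sum_(x < M * w.+1) h x)%R.
have dvd_S w : (M%:Z %| S w)%Z.
  apply: dvdz_sum_deg_lt dh _ (dvdn_mulr _ (dvdnn M)) => i /andP[i_gt0 it].
  by apply: m_coprime; rewrite // i_gt0 ltnS.
have S_divK w : (M%:Z * (S w %/ M%:Z)%Z)%R = S w by rewrite mulrC divzK.
exists (fun w => (S w %/ M%:Z)%Z); split.
  apply: (@deg_lt_mull_inv _ _ M%:Z); first by rewrite eqz_nat -lt0n.
  apply: deg_lt_ext (deg_lt_partial_sum M M dh) => w.
  by rewrite S_divK /S mulnS addnC.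
move=> w; rewrite /= -natz natr_sum.
under eq_bigr => x _ do rewrite natz Eh.
by rewrite -mulr_sumr [in RHS]big_nat_recr //= PoszM -mulrA S_divK.
Qed.

End Weights.

Lemma sum_ord_widen0 n1 n2 (F : nat -> nat) :
  n1 <= n2 -> (forall i, n1 <= i -> F i = 0) -> \sum_(i < n1) F i = \sum_(i < n2) F i.
Proof.
move=> le F0; rewrite (big_ord_widen _ _ le) big_mkcond; apply: eq_bigr => i _.
by case: ltnP => // /F0.
Qed.

Lemma sum_dvdn_supp d n (F : nat -> nat) : 0 < d -> (forall y, ~~ (d %| y) -> F y = 0) ->
  \sum_(y < n.+1) F y = \sum_(q < (n %/ d).+1) F (d * q).
Proof.
move=> d_gt0 F0; elim: n => [|n IH]; first by rewrite div0n !big_ord1 muln0.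
rewrite big_ord_recr /= IH; have [dvd_d|ndvd_d] := boolP (d %| n.+1).
  have e : n.+1 %/ d = (n %/ d).+1 by rewrite divnS // dvd_d.
  by rewrite e [RHS]big_ord_recr /= -e mulnC divnK.
by rewrite (F0 _ ndvd_d) addn0 divnS // (negbTE ndvd_d).
Qed.

Fixpoint nreps (s : seq nat) (N : nat) : nat :=
  if s is a :: s' then \sum_(c < N.+1) (c * a <= N) * nreps s' (N - c * a) else N == 0.

Lemma nreps_cons_mul a s z : 0 < a ->
  nreps (a :: s) (a * z) = \sum_(y < z.+1) nreps s (a * y).
Proof.
move=> a_gt0; rewrite /= [RHS](reindex_inj rev_ord_inj) /=.
pose G c := (c * a <= a * z) * nreps s (a * z - c * a).
rewrite -(@sum_ord_widen0 z.+1 _ G) ?ltnS ?leq_pmull //.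
  apply: eq_bigr => c _.
  by rewrite /G [c * a]mulnC leq_pmul2l // -ltnS ltn_ord mul1n -mulnBr subSS.
by move=> c; rewrite /G ltnNge [c * a]mulnC leq_pmul2l // => /negbTE->.
Qed.

Lemma nreps_dvd d s N : all (dvdn d) s -> ~~ (d %| N) -> nreps s N = 0.
Proof.
elim: s N => [|a s IH] N /=; first by case: N => //; rewrite dvdn0.
move=> /andP[da ds] dN; apply: big1 => c _; case: leqP => // cN.
by rewrite mul1n IH // -(dvdn_addr _ (dvdn_mull c da)) subnKC.
Qed.

Definition geom_poly (B a : nat) : {poly nat} := (\sum_(v < B.+1) 'X^(a * v))%R.

Lemma nreps_coef B s N : N <= B -> all (leq 1) s ->
  nreps s N = ((\prod_(a <- s) geom_poly B a)`_N)%R.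
Proof.
elim: s N => [|a s IH] N NB /=; first by rewrite big_nil coef1 natn.
move=> /andP[a_gt0 s_gt0]; rewrite big_cons mulr_suml coef_sum.
pose G c := (c * a <= N) * nreps s (N - c * a).
rewrite (@sum_ord_widen0 N.+1 B.+1 G) //; last first.
  by move=> c Nc; rewrite /G leqNgt (leq_trans Nc) ?leq_pmulr.
apply: eq_bigr => c _; rewrite coefXnM /G [c * a]mulnC ltnNge.
by case: leqP => // acN; rewrite mul1n IH ?(leq_trans (leq_subr _ _)).
Qed.

Lemma card_partitions N (P : pred 'I_N.+1) :
  #|[set c : {ffun 'I_N.+1 -> 'I_N.+1} |
      [forall k, (c k != 0 :> nat) ==> P k] && (\sum_(k < N.+1) k * c k == N)]|
  = ((\prod_(k | P k) geom_poly N k)`_N)%R.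
Proof.
pose F (k v : 'I_N.+1) : {poly nat} :=
  if (v != 0 :> nat) ==> P k then 'X^(k * v)%R else 0%R.
have indicator c : (c \in [set c : {ffun 'I_N.+1 -> 'I_N.+1} |
      [forall k, (c k != 0 :> nat) ==> P k] && (\sum_(k < N.+1) k * c k == N)] : nat)
    = ((\prod_k F k (c k))`_N)%R.
  rewrite inE; case: (boolP [forall k, _]) => [/forallP c_on_P | /forallPn[k not_P]] /=.
    rewrite (eq_bigr (fun k : 'I_N.+1 => 'X^(k * c k))%R); last by move=> k _; rewrite /F c_on_P.
    by rewrite prodrXr coefXn natn eq_sym.
  by rewrite (bigD1 k) //= /F (negbTE not_P) mul0r coef0.
rewrite -sum1_card big_mkcond /=.
under eq_bigr => c _ do rewrite -[if _ then _ else _]/(nat_of_bool (c \in _)) indicator.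
rewrite -coef_sum -bigA_distr_bigA /= [in RHS]big_mkcond /=.
rewrite [in RHS](eq_bigr (fun k => \sum_(v < N.+1) F k v)%R) // => k _.
rewrite /F /geom_poly; case: (P k); first by apply: eq_bigr => v _; rewrite implybT.
by rewrite big_ord_recl /= muln0 expr0 big1_eq addr0.
Qed.

Lemma sum_rev_tail N b (g : nat -> nat) : b <= N ->
  \sum_(z < N | b <= z) g (N - z) = \sum_(x < N - b) g x.+1.
Proof.
move=> bN; rewrite (reindex_inj rev_ord_inj) /= (big_ord_widen N (fun x => g x.+1) (leq_subr b N)).
by apply: eq_big => [x | x _]; have := ltn_ord x; [lia | move=> xN; rewrite subKn].
Qed.

Lemma sum_weight_step a L (g F : nat -> nat) : 0 < a ->
  \sum_(z < a * L) g (a * L - z) * \sum_(q < (z %/ a).+1) F q =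
  \sum_(q < L) (\sum_(x < a * (L - q)) g x.+1) * F q.
Proof.
move=> a_gt0.
have below_z (z : 'I_(a * L)) :
    \sum_(q < (z %/ a).+1) F q = \sum_(q < L | a * q <= z) F q.
  rewrite (big_ord_widen _ _ (_ : (z %/ a).+1 <= L)); last by rewrite ltn_divLR // [L * a]mulnC.
  by apply: eq_bigl => q; rewrite ltnS leq_divRL // mulnC.
under eq_bigr => z _ do rewrite below_z big_distrr big_mkcond /=.
rewrite exchange_big; apply: eq_bigr => q _.
rewrite mulnBr -sum_rev_tail; last by rewrite leq_mul2l ltnW ?orbT.
by rewrite big_distrl -big_mkcond.
Qed.

Lemma coprime_lt_pfactors a s i :
  0 < a -> (forall p, prime p -> p %| a -> s <= p) -> 0 < i < s -> coprime a i.
Proof.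
move=> a_gt0 a_pfactors /andP[i_gt0 i_lt_s]; rewrite coprime_has_primes //.
apply/hasPn => p; rewrite !mem_primes => /and3P[p_pr _ p_dvd_i].
apply/negP => /and3P[_ _ /(a_pfactors _ p_pr)].
by rewrite leqNgt (leq_ltn_trans (dvdn_leq i_gt0 p_dvd_i)).
Qed.

Lemma in_range_le K i j : i <= j -> in_range K j -> in_range K i.
Proof. by case: K => //= k ij /(leq_trans ij). Qed.

Lemma MprodS m j : Mprod m j.+1 = Mprod m j * m j.+1.
Proof. by rewrite /Mprod big_ord_recr. Qed.

Lemma Mprod_dvd m i j : i <= j -> Mprod m i %| Mprod m j.
Proof.
move=> /subnK <-; elim: (j - i) => [|d IH]; first by rewrite add0n.
by rewrite addSn MprodS dvdn_mulr.
Qed.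

Section MaryPartitions.
Variables (m : nat -> nat) (K : option nat).
Hypothesis m0 : m 0 = 1.
Hypothesis m_ge2 : forall j, 0 < j -> in_range K j -> 2 <= m j.

Lemma Mprod0 : Mprod m 0 = 1.
Proof. by rewrite /Mprod big_ord1 m0. Qed.

Lemma Mprod_from1 j : Mprod m j = \prod_(1 <= i < j.+1) m i.
Proof. by rewrite /Mprod -(big_mkord xpredT) big_ltn // m0 mul1n. Qed.

Lemma Mprod_gt0 j : in_range K j -> 0 < Mprod m j.
Proof.
elim: j => [|j IH] j_in; first by rewrite Mprod0.
by rewrite MprodS muln_gt0 IH ?(in_range_le (leqnSn j)) // (leq_trans _ (m_ge2 _ j_in)).
Qed.

Lemma Mprod_ltS j : in_range K j.+1 -> Mprod m j < Mprod m j.+1.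
Proof.
by move=> j_in; rewrite MprodS ltn_Pmulr ?m_ge2 ?Mprod_gt0 ?(in_range_le (leqnSn j)).
Qed.

Lemma Mprod_ltn i j : i < j -> in_range K j -> Mprod m i < Mprod m j.
Proof.
elim: j => // j IH; rewrite ltnS leq_eqVlt => /predU1P[-> | ij] j_in.
  exact: Mprod_ltS.
exact: ltn_trans (IH ij (in_range_le (leqnSn j) j_in)) (Mprod_ltS j_in).
Qed.

Lemma ltn_Mprod j : in_range K j -> j < Mprod m j.
Proof.
elim: j => [|j IH] j_in; first by rewrite Mprod0.
exact: leq_ltn_trans (IH (in_range_le (leqnSn j) j_in)) (Mprod_ltS j_in).
Qed.

Lemma Mprod_inj i j : in_range K i -> in_range K j -> Mprod m i = Mprod m j -> i = j.
Proof.
move=> i_in j_in eq_ij; case: (ltngtP i j) => // [ij | ji].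
  by have := Mprod_ltn ij j_in; rewrite eq_ij ltnn.
by have := Mprod_ltn ji i_in; rewrite eq_ij ltnn.
Qed.

Definition Mparts t N :=
  [seq Mprod m i | i <- index_iota t N.+1 & in_range K i && (Mprod m i <= N)].

Lemma Mparts_cons t N : in_range K t -> Mprod m t <= N ->
  Mparts t N = Mprod m t :: Mparts t.+1 N.
Proof.
move=> t_in tN; have t_le_N : t <= N by rewrite ltnW // (leq_trans (ltn_Mprod t_in)).
by rewrite /Mparts /index_iota subSS subSn //= t_in tN.
Qed.

Lemma Mparts_gt0 t N : all (leq 1) (Mparts t N).
Proof.
apply/allP => a /mapP[i]; rewrite mem_filter => /andP[/andP[i_in _] _] ->.
exact: Mprod_gt0.
Qed.

Lemma Mparts_dvd t N : all (dvdn (Mprod m t)) (Mparts t N).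
Proof.
apply/allP => a /mapP[i]; rewrite mem_filter mem_index_iota => /andP[_ /andP[ti _]] ->.
exact: Mprod_dvd.
Qed.

Lemma perm_Mparts N :
  perm_eq [seq val k | k <- [seq k : 'I_N.+1 <- index_enum _ | is_Mpart m K k]] (Mparts 0 N).
Proof.
apply: uniq_perm.
- by rewrite map_inj_uniq ?filter_uniq ?index_enum_uniq //; apply: val_inj.
- rewrite map_inj_in_uniq ?filter_uniq ?iota_uniq // => i j.
  by rewrite !mem_filter => /andP[/andP[i_in _] _] /andP[/andP[j_in _] _]; apply: Mprod_inj.
move=> a; apply/mapP/mapP => [[k] | [i]].
  rewrite mem_filter => /andP[/existsP[r /andP[r_in /eqP Mr]] _] ->.
  exists (val r); last by rewrite Mr.
  rewrite mem_filter mem_index_iota r_in Mr -ltnS ltn_ord /=.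
  by rewrite (leq_trans (ltn_ord r)) // ltnS -ltnS ltn_ord.
rewrite mem_filter mem_index_iota => /andP[/andP[i_in iN] _] ->.
exists (Ordinal (iN : Mprod m i < N.+1)) => //.
rewrite mem_filter mem_index_enum andbT; apply/existsP.
by exists (@Ordinal (Mprod m i).+1 i (ltnW (ltn_Mprod i_in))); rewrite /= i_in eqxx.
Qed.

Lemma pM_nreps N : pM m K N = nreps (Mparts 0 N) N.
Proof.
rewrite /pM card_partitions -big_filter -(big_map val xpredT (geom_poly N)).
by rewrite (perm_big _ (perm_Mparts N)) -nreps_coef ?Mparts_gt0.
Qed.

Lemma nreps_Mparts_rec t N z : in_range K t.+1 -> Mprod m t <= N ->
  nreps (Mparts t N) (Mprod m t * z) =
  \sum_(q < (z %/ m t.+1).+1) nreps (Mparts t.+1 N) (Mprod m t.+1 * q).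
Proof.
move=> t1_in tN; have t_in := in_range_le (leqnSn t) t1_in.
rewrite Mparts_cons // nreps_cons_mul ?Mprod_gt0 //.
rewrite (@sum_dvdn_supp (m t.+1) _ (fun y => nreps (Mparts t.+1 N) (Mprod m t * y))).
- by apply: eq_bigr => q _; rewrite mulnA -MprodS.
- exact: leq_trans (m_ge2 _ t1_in).
move=> y m_ndvd_y; apply: nreps_dvd (Mparts_dvd _ _) _.
by rewrite MprodS dvdn_pmul2l ?Mprod_gt0.
Qed.

Section Expansion.
Variables (n r : nat).
Hypotheses (n_gt0 : 0 < n) (r_in : in_range K r).
Local Notation N := (Mprod m r * n - 1).
(* L t = M_r n / M_t *)
Local Notation L t := (\prod_(t.+1 <= i < r.+1) m i * n).

Lemma pM_weight_expansion t : t <= r ->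
  pM m K N = \sum_(z < L t) weight m t (L t - z) * nreps (Mparts t N) (Mprod m t * z).
Proof.
have Mrn_gt0 : 0 < Mprod m r * n by rewrite muln_gt0 Mprod_gt0.
elim: t => [_ | t IH tr].
  have -> : L 0 = N.+1.
    by rewrite subn1 prednK // Mprod_from1.
  rewrite big_ord_recr /= subSnn mul1n Mprod0 mul1n big1 ?pM_nreps // => z _.
  by rewrite subSn ?(ltnW (ltn_ord z)) // eqSS subn_eq0 leqNgt ltn_ord.
have t1_in := in_range_le tr r_in.
have tN : Mprod m t <= N.
  by rewrite -ltnS subn1 prednK // (leq_trans (Mprod_ltn tr r_in)) ?leq_pmulr.
rewrite (IH (ltnW tr)) big_ltn // -mulnA.
under [LHS]eq_bigr => z _ do rewrite nreps_Mparts_rec //.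
rewrite (@sum_weight_step _ _ _ (fun q => nreps (Mparts t.+1 N) (Mprod m t.+1 * q))) //.
exact: leq_trans (m_ge2 _ t1_in).
Qed.

End Expansion.

End MaryPartitions.

Theorem corollary1p4 (m : nat -> nat) (K : option nat)
  (hm0 : m 0 = 1)
  (hm2 : forall j, 1 <= j -> in_range K j -> 2 <= m j)
  (hprime : forall t p, 1 <= t -> in_range K t -> prime p -> p %| m t -> t <= p)
  (n r : nat) (hn : 0 < n) (hr : 0 < r) (hrK : in_range K r) :
  pM m K ((\prod_(1 <= i < r.+1) m i) * n - 1) = 0 %[mod \prod_(2 <= i < r.+1) m i].
Proof.
have m_gt0 s : 0 < s <= r -> 0 < m s.
  by case/andP=> s_gt0 sr; rewrite (leq_trans _ (hm2 _ s_gt0 (in_range_le sr hrK))).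
have m_coprime s i : 0 < i < s -> s <= r -> coprime (m s) i.
  move=> /andP[i_gt0 i_lt_s] sr; have s_gt0 := ltn_trans i_gt0 i_lt_s.
  apply: coprime_lt_pfactors => [|p|]; first by rewrite m_gt0 ?s_gt0.
    exact: hprime s_gt0 (in_range_le sr hrK).
  by rewrite i_gt0.
have r_range : 0 < r <= r by rewrite hr leqnn.
have [h [_ weight_h]] := weight_factor m_gt0 m_coprime r_range.
rewrite -(Mprod_from1 hm0) (pM_weight_expansion hm0 hm2 hn hrK (leqnn r)) big_geq // mul1n.
apply/eqP; rewrite mod0n; apply: dvdn_sum => z _; apply: dvdn_mulr.
have : ((\prod_(2 <= i < r.+1) m i)%:Z %| (weight m r (n - z))%:Z)%Z.
  by rewrite -subnSK // weight_h dvdz_mulr.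
by rewrite dvdzE !absz_nat.
Qed.
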